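(* Let $H$ be a graph and $G=H\odot K_1$. Then: (1) $G$ is $A$-AW for every integer $\ell\ge 2$; (2) if $G$ has $m$ edges and $n$ vertices, then $T_{V(G)}^{A(G)}(1)=\{2(m-n)\}$; (3) if $G$ is a forest with $c$ connected components, then $T_{V(G)}^{A(G)}(1)=\{-2c\}$.
   Context: All graphs are finite and simple. For a graph $H$, $H\odot K_1$ is the graph obtained from $H$ by adding, for each vertex $u$ of $H$, a new vertex adjacent only to $u$. Fix $\ell\ge 2$; labelings are maps $V(G)\to\mathbb{Z}_\ell$. In the adjacency Lights Out game, toggling a vertex $w$ adds $1$ (mod $\ell$) to the label of each vertex of the open neighborhood $N(w)$; the game is won when all labels are $0$; $G$ is $A$-AW if every labeling is winnable. For $U\subseteq V(G)$ and $r\in\mathbb{Z}_\ell$, $T_U^{A(G)}(r)\subseteq\mathbb{Z}_\ell$ is the set of all $t$ such that the adjacency game on $G$ starting from the labeling that is $r$ on $U$ and $0$ elsewhere can be won with the vertices of $U$ toggled a total of $t$ times (mod $\ell$). *)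

From HB Require Import structures.
From mathcomp Require Import all_boot all_order all_algebra.
Set Implicit Arguments. Unset Strict Implicit. Unset Printing Implicit Defensive.
Import GRing.Theory.
Local Open Scope ring_scope.

(* A finite simple graph is (T : finType, e : rel T) with e symmetric and irreflexive. *)

(* Corona H ⊙ K1: vertices inl u (original) and inr u (new pendant vertex attached to u). *)
Definition corona (T : finType) (e : rel T) : rel (T + T) :=
  fun a b => match a, b with
  | inl u, inl v => e u v
  | inl u, inr v => u == v
  | inr u, inl v => u == v
  | inr _, inr _ => false
  end.

(* Toggling w adds 1 to every vertex of N(w); x w = number of toggles of w (mod l).
   Vertex v ends with label  lab v + sum_{w : v in N(w)} x w. *)
Definition winnable (T : finType) (e : rel T) (l : nat) (lab : T -> 'Z_l) : Prop :=
  exists x : T -> 'Z_l, forall v, lab v + \sum_(w | e w v) x w = 0.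

Definition A_AW (T : finType) (e : rel T) (l : nat) : Prop :=
  forall lab : T -> 'Z_l, winnable e lab.

Definition Tset (T : finType) (e : rel T) (l : nat) (U : {set T}) (r : 'Z_l)
  : {set 'Z_l} :=
  [set t : 'Z_l | [exists x : {ffun T -> 'Z_l},
     [forall v, (if v \in U then r else 0) + \sum_(w | e w v) x w == 0]
     && (\sum_(u in U) x u == t)]].

Definition nedges (T : finType) (e : rel T) : nat :=
  #|[set [set p.1; p.2] | p in [set p : T * T | e p.1 p.2]]|.

Definition forest (T : finType) (e : rel T) : Prop :=
  ~ exists s : seq T, [/\ uniq s, 3 <= size s & cycle e s]%N.

Definition ncomp (T : finType) (e : rel T) : nat :=
  #|[set [set y | connect e x y] | x : T]|.

From HB Require Import structures.
From mathcomp Require Import all_boot all_order all_algebra zify.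
Set Implicit Arguments. Unset Strict Implicit. Unset Printing Implicit Defensive.
Import GRing.Theory.

(* In H ⊙ K1 the pendant vertex u' hanging at u has u as its only neighbour, so a
   winning play must toggle u exactly -lab(u') times; the label of u then fixes how
   often u' is toggled.  Hence every labeling is winnable, in exactly one way.  For the
   all-ones labeling u is toggled -1 times and u' exactly deg_H(u) - 1 times, in total
   2|E(H)| - 2|V(H)| = 2(m - n), because m = |E(H)| + |V(H)| and n = 2|V(H)|.  A forest
   satisfies m + c = n (deleting an edge of a forest splits a component), which turns
   2(m - n) into -2c. *)

Section Edges.
Variable T : finType.
Implicit Types (e : rel T) (a b c d x y : T).

Definition edges e : {set {set T}} :=
  [set [set p.1; p.2] | p in [set p : T * T | e p.1 p.2]].

Definition link a b : rel T :=
  fun x y => (x == a) && (y == b) || (x == b) && (y == a).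

Definition deg e x : nat := #|[set y | e x y]|.

Lemma link_sym a b : symmetric (link a b).
Proof. by move=> x y; rewrite /link orbC andbC [(y == b) && _]andbC. Qed.

Lemma eq_set2 a b c d : ([set c; d] == [set a; b]) = link a b c d.
Proof.
apply/eqP/idP => [E | /orP[] /andP[/eqP-> /eqP->] //]; last by rewrite setUC.
have /set2P[cE|cE] : c \in [set a; b] by rewrite -E set21.
all: have /set2P[dE|dE] : d \in [set a; b] by rewrite -E set22.
all: rewrite /link cE dE ?eqxx ?orbT //.
all: move: (set21 a b) (set22 a b); rewrite -E cE dE setUid !inE.
all: by [move=> _ /eqP->; rewrite eqxx | move=> /eqP-> _; rewrite eqxx].
Qed.

Lemma card_arcs e : (\sum_x deg e x)%N = #|[set p : T * T | e p.1 p.2]|.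
Proof.
rewrite -sum1dep_card -(pair_big_dep xpredT e (fun _ _ => 1%N)) /=.
by apply: eq_bigr => x _; rewrite sum1dep_card.
Qed.

Lemma handshake e :
  symmetric e -> irreflexive e -> (\sum_x deg e x)%N = (2 * nedges e)%N.
Proof.
move=> e_sym e_irr; rewrite card_arcs -sum1_card.
rewrite (partition_big_imset (fun p : T * T => [set p.1; p.2])) /=.
rewrite /nedges -/(edges e) mulnC -sum_nat_const.
apply: eq_bigr => S /imsetP[[a b]]; rewrite inE /= => e_ab ->.
have a_neq_b : a != b by apply: contraTneq e_ab => ->; rewrite e_irr.
rewrite sum1dep_card.
have -> : [set p in [set p | e p.1 p.2] | [set p.1; p.2] == [set a; b]]
          = [set (a, b); (b, a)].
  apply/setP => -[c d]; rewrite !inE /= eq_set2 /link -!xpair_eqE.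
  by apply: andb_idl => /orP[] /eqP[-> ->]; rewrite // e_sym.
by rewrite cards2 xpair_eqE (negbTE a_neq_b).
Qed.
End Edges.

Section Components.
Variable T : finType.
Implicit Types (e r : rel T) (a b x y : T).

Definition component e x : {set T} := [set y | connect e x y].

Lemma nedges_eq0P e : reflect (forall x y, ~~ e x y) (nedges e == 0)%N.
Proof.
rewrite cards_eq0 imset_eq0; apply: (iffP eqP) => [E x y | e0].
  by apply/negP => e_xy; have := in_set0 (x, y); rewrite -E inE e_xy.
by apply/setP => p; rewrite !inE (negbTE (e0 _ _)).
Qed.

Lemma ncomp_edgeless e : (forall x y, ~~ e x y) -> ncomp e = #|T|.
Proof.
move=> e0; rewrite /ncomp (@eq_imset _ _ _ (@set1 T)) ?card_imset //.
  exact: set1_inj.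
move=> x; apply/setP => y; rewrite !inE.
apply/idP/eqP => [/connectP[[|z p] /=] | <-]; last exact: connect0.
  by move=> _ ->.
by rewrite (negbTE (e0 _ _)).
Qed.

Lemma eq_ncomp e e' : e =2 e' -> ncomp e = ncomp e'.
Proof.
move=> E; rewrite /ncomp (@eq_imset _ _ _ (component e')) => [// | x].
by apply/setP => y; rewrite !inE (eq_connect E).
Qed.

Section AddLink.
Variables (r : rel T) (a b : T).
Hypotheses (r_sym : symmetric r) (r_ab : ~~ connect r a b).
Let r1 := relU r (link a b).
Let near x := connect r x a || connect r x b.

Lemma connect_add_link x y : connect r1 x y = connect r x y || near x && near y.
Proof.
have r_csym : connect_sym r := sym_connect_sym r_sym.
apply/idP/idP.
  case/connectP=> p; elim: p x => [|z p IH] x /=.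
    by move=> _ ->; rewrite connect0.
  case/andP=> /orP[r_xz | /orP[] /andP[/eqP-> /eqP->]] pz /(IH _ pz){IH}.
  - by rewrite /near !(same_connect r_csym (connect1 r_xz)).
  - rewrite /near !connect0 orbT /= => /orP[r_by | ->]; last by rewrite orbT.
    by rewrite (r_csym y b) r_by !orbT.
  - rewrite /near !connect0 orbT /= => /orP[r_ay | ->]; last by rewrite orbT.
    by rewrite (r_csym y a) r_ay !orbT.
have sub : subrel (connect r) (connect r1).
  by apply: connect_sub => u v r_uv; apply: connect1; rewrite /= r_uv.
have r1_csym : connect_sym r1.
  by apply: sym_connect_sym => u v; rewrite /= r_sym link_sym.
have near_a z : near z -> connect r1 z a.
  case/orP => /sub // r1_zb; apply: connect_trans r1_zb (connect1 _).
  by rewrite /= /link !eqxx !orbT.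
case/orP => [/sub // | /andP[/near_a r1_xa /near_a r1_ya]].
by rewrite (connect_trans r1_xa) // r1_csym.
Qed.

Lemma ncomp_add_link : (ncomp r1).+1 = ncomp r.
Proof.
have r_csym : connect_sym r := sym_connect_sym r_sym.
pose A := [set x | near x].
pose K := component r @: ~: A.
have a_near : a \in A by rewrite inE /near connect0.
have b_near : b \in A by rewrite inE /near connect0 orbT.
have split_near f : [set f x | x : T] = f @: A :|: f @: ~: A.
  rewrite -imsetU setUCr; apply/setP => S.
  by apply/imsetP/imsetP => -[x _ ->]; exists x.
have far_K S : S \in K -> (a \notin S) && (b \notin S).
  by case/imsetP=> x; rewrite !inE negb_or => /andP[x_a x_b] ->; rewrite !inE x_a x_b.
have comp1_near x : x \in A -> component r1 x = A.
  rewrite inE => x_near; apply/setP => y.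
  rewrite /component !inE connect_add_link x_near /=.
  apply/orP/idP => [[r_xy | //] | ->]; last by right.
  have r_yx : connect r y x by rewrite r_csym.
  by rewrite /near !(same_connect r_csym r_yx).
have comp1_far x : x \in ~: A -> component r1 x = component r x.
  rewrite !inE => x_far; apply/setP => y.
  by rewrite /component !inE connect_add_link (negbTE x_far) orbF.
have comp_near : component r @: A = [set component r a; component r b].
  apply/setP => S; rewrite !inE.
  apply/imsetP/orP => [[x] | [] /eqP->]; [| by exists a | by exists b].
  rewrite inE => /orP[] r_x ->; [left | right]; apply/eqP/setP => y;
    by rewrite /component !inE (same_connect r_csym r_x).
have comp_ab : component r a != component r b.
  by apply/negP => /eqP/setP/(_ b); rewrite !inE connect0 (negbTE r_ab).
have comp1_A : component r1 @: A = [set A].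
  apply/setP => S; rewrite inE; apply/imsetP/eqP => [[x /comp1_near <-] // | ->].
  by exists a; rewrite ?comp1_near.
have comp_a : component r a \notin K by apply/negP => /far_K; rewrite !inE connect0.
have comp_b : component r b \notin K.
  by apply/negP => /far_K; rewrite !inE connect0 andbF.
have A_K : A \notin K by apply/negP => /far_K; rewrite a_near.
rewrite /ncomp !split_near -/(component r1) -/(component r) (eq_in_imset comp1_far).
rewrite comp1_A comp_near -/K -setUA !cardsU1.
by rewrite in_setU1 negb_or comp_ab comp_a comp_b A_K.
Qed.

End AddLink.
End Components.

Section Forests.
Variable T : finType.
Implicit Types (e : rel T) (a b : T).

Lemma forest_subrel e e' : subrel e' e -> forest e -> forest e'.
Proof.
move=> sub_e'e forest_e [s [s_uniq s_size e'_s]]; apply: forest_e.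
by exists s; split; last exact: sub_cycle e'_s.
Qed.

Definition del_link e a b : rel T := fun x y => e x y && ~~ link a b x y.

Section DelLink.
Variables (e : rel T) (a b : T).
Hypotheses (e_sym : symmetric e) (e_irr : irreflexive e) (e_ab : e a b).
Let e0 := del_link e a b.

Lemma del_link_sym : symmetric e0.
Proof. by move=> x y; rewrite /e0 /del_link e_sym link_sym. Qed.

Lemma relU_del_link : e =2 relU e0 (link a b).
Proof.
move=> x y /=; rewrite /e0 /del_link.
case: (boolP (link a b x y)) => [link_xy | _]; last by rewrite andbT orbF.
by rewrite orbT; case/orP: link_xy => /andP[/eqP-> /eqP->]; rewrite // e_sym.
Qed.

Lemma nedges_del_link : nedges e = (nedges e0).+1.
Proof.
change (#|edges e| = (#|edges e0|).+1).
have -> : edges e0 = edges e :\ [set a; b].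
  apply/setP => S; rewrite !inE; apply/imsetP/andP.
    case=> -[c d]; rewrite inE /= /e0 /del_link => /andP[e_cd not_link] ->.
    by rewrite eq_set2 not_link; split=> //; apply/imsetP; exists (c, d); rewrite ?inE.
  case=> S_ab /imsetP[[c d]]; rewrite inE /= => e_cd S_cd.
  by exists (c, d); rewrite // inE /= /e0 /del_link e_cd -eq_set2 -S_cd.
rewrite (cardsD1 [set a; b] (edges e)).
by rewrite (_ : [set a; b] \in _) //; apply/imsetP; exists (a, b); rewrite ?inE.
Qed.

Lemma forest_del_link : forest e -> ~~ connect e0 a b.
Proof.
have a_neq_b : a != b by apply: contraTneq e_ab => ->; rewrite e_irr.
move=> forest_e; apply/negP => /connectP[p e0_p p_b].
case/shortenP: e0_p p_b => -[|c [|d q]] e0_p p_uniq _ p_b.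
- by rewrite p_b eqxx in a_neq_b.
- move: e0_p p_b => /= /andP[e0_ac _] b_c; move: e0_ac.
  by rewrite -b_c /e0 /del_link /link !eqxx /= andbF.
apply: forest_e; exists [:: a, c, d & q]; split=> //.
rewrite /cycle rcons_path (sub_path _ e0_p) => [|x y /andP[] //].
by rewrite -p_b e_sym.
Qed.

End DelLink.

Lemma forest_nedges_ncomp e : symmetric e -> irreflexive e -> forest e ->
  (nedges e + ncomp e)%N = #|T|.
Proof.
move: {2}(nedges e) (erefl (nedges e)) => n.
elim: n e => [|n IH] e e_m e_sym e_irr forest_e.
  by rewrite e_m ncomp_edgeless //; apply/nedges_eq0P/eqP.
case: (pickP (fun p : T * T => e p.1 p.2)) => [[a b] /= e_ab | no_edge]; last first.
  suff /nedges_eq0P : forall x y, ~~ e x y by rewrite e_m.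
  by move=> x y; rewrite (no_edge (x, y)).
pose e0 := del_link e a b.
have e0_sym : symmetric e0 := del_link_sym a b e_sym.
have e0_irr : irreflexive e0 by move=> x; rewrite /e0 /del_link e_irr.
have e0_forest : forest e0 by apply: forest_subrel forest_e => x y /andP[].
have e0_m : nedges e0 = n by apply: succn_inj; rewrite -e_m (nedges_del_link e_ab).
rewrite (eq_ncomp (relU_del_link e_sym e_ab)) (nedges_del_link e_ab) addSn -addnS.
rewrite (ncomp_add_link e0_sym (forest_del_link e_sym e_irr e_ab forest_e)).
exact: IH e0 e0_m e0_sym e0_irr e0_forest.
Qed.

End Forests.

Local Open Scope ring_scope.

Section Corona.
Variables (V : finType) (h : rel V).
Hypotheses (h_sym : symmetric h) (h_irr : irreflexive h).

Lemma corona_sym : symmetric (corona h).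
Proof. by case=> x [] y //=; rewrite 1?h_sym // eq_sym. Qed.

Lemma corona_irr : irreflexive (corona h).
Proof. by case=> x /=; rewrite ?h_irr. Qed.

Lemma deg_corona_inl u : deg (corona h) (inl u) = (deg h u).+1.
Proof.
rewrite /deg -sum1dep_card big_sumType /= [X in (_ + X)%N](big_pred1 u) //.
by rewrite addn1 sum1dep_card.
Qed.

Lemma deg_corona_inr u : deg (corona h) (inr u) = 1%N.
Proof.
by rewrite /deg -sum1dep_card big_sumType /= big_pred0_eq addn0 (big_pred1 u).
Qed.

Lemma nedges_corona : (2 * nedges (corona h))%N = (\sum_u deg h u + 2 * #|V|)%N.
Proof.
rewrite -(handshake corona_sym corona_irr) big_sumType /=.
under eq_bigr do rewrite deg_corona_inl -addn1.
under [X in (_ + X)%N]eq_bigr do rewrite deg_corona_inr.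
by rewrite big_split /= -addnA addnn -mul2n sum1_card.
Qed.

Section Toggles.
Variable R : pzRingType.

Lemma sum_corona_inl (x : V + V -> R) u :
  \sum_(w | corona h w (inl u)) x w = \sum_(w | h w u) x (inl w) + x (inr u).
Proof. by rewrite big_sumType /= big_pred1_eq. Qed.

Lemma sum_corona_inr (x : V + V -> R) u :
  \sum_(w | corona h w (inr u)) x w = x (inl u).
Proof. by rewrite big_sumType /= big_pred1_eq big_pred0 // addr0. Qed.

Definition corona_toggles (lab : V + V -> R) (v : V + V) : R :=
  match v with
  | inl u => - lab (inr u)
  | inr u => - lab (inl u) + \sum_(w | h w u) lab (inr w)
  end.

Lemma corona_toggles_win lab v :
  lab v + \sum_(w | corona h w v) corona_toggles lab w = 0.
Proof.
case: v => u; last by rewrite sum_corona_inr /= subrr.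
by rewrite sum_corona_inl /= sumrN addrCA addNKr addNr.
Qed.

Lemma sum_neighbours_const (c : R) u : \sum_(w | h w u) c = c *+ deg h u.
Proof. by rewrite -sumr_const; apply: eq_bigl => w; rewrite inE h_sym. Qed.

Lemma corona_forced_sum (x : V + V -> R) :
    (forall v, 1 + \sum_(w | corona h w v) x w = 0) ->
  \sum_v x v = (2 * ((nedges (corona h))%:Z - #|{: V + V}|%:Z))%:~R.
Proof.
move=> x_wins.
have x_inl u : x (inl u) = -1.
  by apply/eqP; rewrite -addr_eq0 addrC -(sum_corona_inr x) x_wins.
have x_inr u : x (inr u) = (deg h u)%:R - 1.
  have := x_wins (inl u); rewrite sum_corona_inl (eq_bigr _ (fun w _ => x_inl w)).
  rewrite sum_neighbours_const mulNrn addrA addrC => /eqP.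
  by rewrite addr_eq0 opprB => /eqP.
have -> : 2 * ((nedges (corona h))%:Z - #|{: V + V}|%:Z) =
          (\sum_u deg h u)%N%:Z - (2 * #|V|)%N%:Z.
  by have := nedges_corona; rewrite card_sum; lia.
rewrite intrB big_sumType /= (eq_bigr _ (fun u _ => x_inl u)).
rewrite (eq_bigr _ (fun u _ => x_inr u)).
rewrite sumrB !sumr_const -!pmulrn -natr_sum mulNrn mul2n -addnn natrD opprD.
by rewrite addrCA.
Qed.
End Toggles.

Lemma Tset_corona l :
  Tset (corona h) [set: V + V] (1 : 'Z_l) =
  [set (2 * ((nedges (corona h))%:Z - #|{: V + V}|%:Z))%:~R].
Proof.
have sum_setT (f : V + V -> 'Z_l) : \sum_(v in [set: V + V]) f v = \sum_v f v.
  by apply: eq_bigl => v; rewrite inE.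
apply/setP => t; rewrite !inE.
apply/existsP/eqP => [[x /andP[/forallP x_wins /eqP <-]] | ->].
  rewrite sum_setT; apply: corona_forced_sum => v.
  by apply/eqP; have := x_wins v; rewrite inE.
pose x : {ffun V + V -> 'Z_l} := [ffun v => corona_toggles (fun=> 1) v].
have x_wins v : 1 + \sum_(w | corona h w v) x w = 0.
  under eq_bigr do rewrite ffunE; exact: corona_toggles_win.
exists x; rewrite sum_setT (corona_forced_sum x_wins) eqxx andbT.
by apply/forallP => v; rewrite inE x_wins.
Qed.

End Corona.

Theorem lemma3p9 (V : finType) (h : rel V) (h_sym : symmetric h)
    (h_irr : irreflexive h) :
  (forall l : nat, (1 < l)%N -> A_AW (corona h) l) /\
  (forall l : nat, (1 < l)%N ->
     Tset (corona h) [set: (V + V)%type] (1 : 'Z_l) =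
     [set ((2 * ((nedges (corona h))%:Z - (#|{: (V + V)%type}|)%:Z))%:~R : 'Z_l)]) /\
  (forall l : nat, (1 < l)%N -> forest (corona h) ->
     Tset (corona h) [set: (V + V)%type] (1 : 'Z_l) =
     [set ((- (2 * (ncomp (corona h))%:Z))%:~R : 'Z_l)]).
Proof.
split; [|split] => l _.
- by move=> lab; exists (corona_toggles h lab); apply: corona_toggles_win.
- exact: Tset_corona h_sym h_irr l.
move=> forest_corona; rewrite (Tset_corona h_sym h_irr).
have m_plus_c : (nedges (corona h) + ncomp (corona h))%N = #|{: V + V}|.
  exact: forest_nedges_ncomp (corona_sym h_sym) (corona_irr h_irr) forest_corona.
by congr [set intmul 1 _]; lia.
Qed.
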